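(* Fix $m\ge1$ and $\rho>0$. For a partition $\kappa$ with at most $m$ parts, regarded as $(\kappa_1,\dots,\kappa_m,0,\dots,0)\in\mathbb Z^n$, let $\delta_\kappa:=\prod_{1\le i<j\le n}\frac{\kappa_i-\kappa_j+j-i}{j-i}$. If $n\to+\infty$ and $k\to+\infty$ with $n/(2k)\to\rho^{-1}$, then $$\limsup\frac1n\log\Big(\sum_{|\kappa|=2k,\ \ell(\kappa)\le m}\delta_\kappa\Big)\le m\big((1+\rho)\log(1+\rho)-\rho\log\rho\big),$$ where the sum is over partitions of $2k$ with at most $m$ nonzero parts.
   Context: $\delta_\kappa$ is the dimension of the irreducible polynomial representation $F_n^\kappa$ of $GL(n)$ with highest weight $\kappa$. $\ell(\kappa)$ is the number of nonzero parts of $\kappa$. Logarithms are natural. *)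

From Stdlib Require Import Reals Lra Lia List Arith.
From Coquelicot Require Import Coquelicot.
Import ListNotations.
Open Scope R_scope.

Definition prodR (a b : nat) (f : nat -> R) : R :=
  fold_right (fun i acc => f i * acc) 1 (seq a (b - a)).

(* delta_kappa for kappa : nat -> nat regarded as (kappa 0, ..., kappa (n-1))
   (0-indexed): prod_{0 <= i < j < n} (kappa_i - kappa_j + j - i)/(j - i) *)
Definition delta (n : nat) (kappa : nat -> nat) : R :=
  prodR 0 n (fun i => prodR (S i) n (fun j =>
    (INR (kappa i) - INR (kappa j) + INR j - INR i) / (INR j - INR i))).

Fixpoint tuples (m N : nat) : list (list nat) :=
  match m with
  | O => [[]]
  | S m' => flat_map (fun a => map (cons a) (tuples m' N)) (seq 0 (S N))
  end.

Fixpoint nonincr (l : list nat) : bool :=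
  match l with
  | x :: ((y :: _) as t) => andb (Nat.leb y x) (nonincr t)
  | _ => true
  end.

(* partitions of N with at most m nonzero parts, each written as the
   nonincreasing list (kappa_1, ..., kappa_m) padded with zeros *)
Definition partitions_le (m N : nat) : list (list nat) :=
  filter (fun l => andb (nonincr l) (Nat.eqb (list_sum l) N)) (tuples m N).

Definition Sdelta (m n k : nat) : R :=
  fold_right Rplus 0
    (map (fun l => delta n (fun i => nth i l 0%nat)) (partitions_le m (2 * k))).

(** Every factor of [delta_kappa] in row [i] is at most [(N + j - i)/(j - i)] with [N = 2k],
    and the rows [i >= m] are identically [1]; hence [delta_kappa <= C(N + n, N)^m].
    There are at most [(N + 1)^m] partitions in the sum, and
    [C(N + n, N) <= (N + n)^(N + n) / (N^N n^n)], whose logarithm is [n * entropy_rate (N / n)].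
    Dividing by [n], the polynomial count disappears in the limit and [N / n -> rho]. *)

From Stdlib Require Import Reals Lra Lia List Arith.
From Coquelicot Require Import Coquelicot.
Open Scope R_scope.

Lemma prodR_empty a b f : (b <= a)%nat -> prodR a b f = 1.
Proof. intros Hba; unfold prodR; now replace (b - a)%nat with 0%nat by lia. Qed.

Lemma prodR_S a b f : (a <= b)%nat -> prodR a (S b) f = prodR a b f * f b.
Proof.
  intros Hab; unfold prodR.
  replace (S b - a)%nat with (S (b - a)) by lia.
  rewrite seq_S, fold_right_app; simpl; replace (a + (b - a))%nat with b by lia.
  generalize (seq a (b - a)); intros l; induction l as [|x l IH]; simpl; [ring|].
  rewrite IH; ring.
Qed.

Lemma prodR_le a b f g :
  (forall i, (a <= i < b)%nat -> 0 <= f i <= g i) -> 0 <= prodR a b f <= prodR a b g.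
Proof.
  induction b as [|b IH]; intros Hfg.
  - rewrite !prodR_empty by lia; lra.
  - destruct (Nat.le_gt_cases a b) as [Hab|Hba].
    + rewrite !prodR_S by exact Hab.
      destruct IH as [IH0 IH1]; [intros i Hi; apply Hfg; lia|].
      destruct (Hfg b ltac:(lia)).
      split; [now apply Rmult_le_pos | apply Rmult_le_compat; lra].
    + rewrite !prodR_empty by lia; lra.
Qed.

Lemma prodR_one a b : prodR a b (fun _ => 1) = 1.
Proof.
  unfold prodR; induction (seq a (b - a)) as [|x l IH]; simpl; [reflexivity|].
  rewrite IH; ring.
Qed.

Lemma prodR_shift a b c f g :
  (forall t, f (t + c)%nat = g t) -> prodR (a + c) (b + c) f = prodR a b g.
Proof.
  intros Hfg; unfold prodR; replace (b + c - (a + c))%nat with (b - a)%nat by lia.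
  generalize (b - a)%nat as len; intros len; revert a.
  induction len as [|len IH]; intros s; simpl; [reflexivity|].
  now rewrite <- Nat.add_succ_l, IH, Hfg.
Qed.

Lemma prodR_ltb_pow m n q :
  prodR 0 n (fun i => if (i <? m)%nat then q else 1) = q ^ Nat.min n m.
Proof.
  induction n as [|n IH]; [reflexivity|].
  rewrite prodR_S, IH by lia.
  destruct (Nat.ltb_spec n m).
  - replace (Nat.min (S n) m) with (S (Nat.min n m)) by lia; simpl; ring.
  - replace (Nat.min (S n) m) with (Nat.min n m) by lia; ring.
Qed.

Definition binom_prod (K L : nat) : R := prodR 1 (S L) (fun t => (INR K + INR t) / INR t).

Lemma binom_prod_S K L :
  binom_prod K (S L) = binom_prod K L * ((INR K + INR (S L)) / INR (S L)).
Proof. unfold binom_prod; now rewrite (prodR_S 1 (S L)) by lia. Qed.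

Lemma binom_factor_ge1 K L : 1 <= (INR K + INR (S L)) / INR (S L).
Proof.
  pose proof (pos_INR K); pose proof (lt_0_INR (S L) ltac:(lia)).
  apply Rle_div_r; lra.
Qed.

Lemma binom_prod_ge1 K L : 1 <= binom_prod K L.
Proof.
  induction L as [|L IH]; [unfold binom_prod, prodR; simpl; lra|].
  rewrite binom_prod_S; pose proof (binom_factor_ge1 K L); nra.
Qed.

Lemma binom_prod_mono K L L' : (L <= L')%nat -> binom_prod K L <= binom_prod K L'.
Proof.
  induction 1 as [|L' _ IH]; [lra|].
  rewrite binom_prod_S; pose proof (binom_factor_ge1 K L'); pose proof (binom_prod_ge1 K L'); nra.
Qed.

Lemma binom_prod_fact K L :
  binom_prod K L * INR (fact K) * INR (fact L) = INR (fact (K + L)).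
Proof.
  induction L as [|L IH]; [unfold binom_prod, prodR; simpl; rewrite Nat.add_0_r; ring|].
  rewrite binom_prod_S, Nat.add_succ_r; cbn [fact]; rewrite !mult_INR, <- IH.
  rewrite !S_INR, plus_INR; pose proof (pos_INR L); field; lra.
Qed.

Lemma sum_f_R0_ge_term (f : nat -> R) N i :
  (forall j, 0 <= f j) -> (i <= N)%nat -> f i <= sum_f_R0 f N.
Proof.
  intros Hf; induction N as [|N IH]; intros Hi; simpl.
  - replace i with 0%nat by lia; lra.
  - pose proof (Hf (S N)).
    destruct (Nat.eq_dec i (S N)) as [->|Hne].
    + pose proof (cond_pos_sum f N Hf); lra.
    + pose proof (IH ltac:(lia)); lra.
Qed.

Lemma binom_prod_le_pow K L :
  binom_prod K L * INR K ^ K * INR L ^ L <= INR (K + L) ^ (K + L).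
Proof.
  assert (Hfact : forall p, 0 < INR (fact p)) by (intros; apply lt_0_INR, lt_O_fact).
  assert (Hterm : binom_prod K L * INR K ^ K * INR L ^ L =
                  Binomial.C (K + L) K * INR K ^ K * INR L ^ (K + L - K)).
  { unfold Binomial.C; replace (K + L - K)%nat with L by lia.
    rewrite <- binom_prod_fact; field; split; apply Rgt_not_eq, Hfact. }
  rewrite Hterm, plus_INR, binomial.
  apply (sum_f_R0_ge_term (fun i => Binomial.C (K + L) i * INR K ^ i * INR L ^ (K + L - i)));
    [intros j | lia].
  unfold Binomial.C.
  pose proof (pos_INR K); pose proof (pos_INR L); pose proof (Hfact j); pose proof (Hfact (K + L - j)%nat).
  repeat apply Rmult_le_pos; try apply pow_le; try apply pos_INR; try lra.
  left; apply Rinv_0_lt_compat, Rmult_lt_0_compat; apply Hfact.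
Qed.

(* [ln C(n + r n, r n) ~ n * entropy_rate r] *)
Definition entropy_rate (r : R) : R := (1 + r) * ln (1 + r) - r * ln r.

Lemma ln_binom_prod_le K L : (0 < K)%nat -> (0 < L)%nat ->
  ln (binom_prod K L) <= INR L * entropy_rate (INR K / INR L).
Proof.
  intros HK HL.
  pose proof (lt_0_INR K HK); pose proof (lt_0_INR L HL).
  assert (HKK : 0 < INR K ^ K) by (apply pow_lt; lra).
  assert (HLL : 0 < INR L ^ L) by (apply pow_lt; lra).
  assert (Hbound : binom_prod K L <= INR (K + L) ^ (K + L) / (INR K ^ K * INR L ^ L)).
  { apply Rle_div_r; [nra|]; rewrite <- Rmult_assoc; apply binom_prod_le_pow. }
  pose proof (binom_prod_ge1 K L).
  eapply Rle_trans; [apply ln_le; [lra | exact Hbound]|].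
  rewrite plus_INR in *; right; unfold entropy_rate.
  replace (1 + INR K / INR L) with ((INR K + INR L) / INR L) by (field; lra).
  rewrite ln_div, ln_mult, !ln_pow, !ln_div, plus_INR by (try apply pow_lt; nra).
  field; lra.
Qed.

Lemma tuples_spec m N l :
  In l (tuples m N) -> length l = m /\ (forall x, In x l -> (x <= N)%nat).
Proof.
  revert l; induction m as [|m IH]; intros l Hl; cbn [tuples] in Hl.
  - destruct Hl as [<-|[]]; split; [reflexivity | intros x []].
  - apply in_flat_map in Hl as [a [Ha Hl]].
    apply in_map_iff in Hl as [t [<- Ht]].
    apply in_seq in Ha; destruct (IH t Ht) as [Hlen HN].
    split; [simpl; lia | intros x [<-|Hx]; [lia | auto]].
Qed.

Lemma tuples_length m N : length (tuples m N) = (S N ^ m)%nat.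
Proof.
  induction m as [|m IH]; [reflexivity|]; cbn [tuples].
  assert (Hflat : forall s, length (flat_map (fun a => map (cons a) (tuples m N)) s)
                            = (length s * S N ^ m)%nat).
  { induction s as [|a s IHs]; [reflexivity|].
    simpl; rewrite length_app, length_map, IHs, IH; lia. }
  rewrite Hflat, length_seq; simpl; lia.
Qed.

Lemma nonincr_nth l : nonincr l = true -> forall i j, (i <= j)%nat -> (nth j l 0 <= nth i l 0)%nat.
Proof.
  induction l as [|x t IH]; intros Hl i j Hij; [destruct i, j; simpl; lia|].
  assert (Ht : nonincr t = true) by (destruct t; [reflexivity | now apply andb_prop in Hl]).
  destruct i, j; simpl; try lia; [| apply IH; auto; lia].
  destruct t as [|y t']; [destruct j; simpl; lia|].
  apply andb_prop in Hl as [Hyx _]; apply Nat.leb_le in Hyx.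
  specialize (IH Ht 0%nat j (Nat.le_0_l j)).
  change (nth 0 (y :: t') 0%nat) with y in IH; lia.
Qed.

Section DeltaBound.

Variables (n m N : nat) (kappa : nat -> nat).
Hypothesis kappa_nonincr : forall i j, (i <= j)%nat -> (kappa j <= kappa i)%nat.
Hypothesis kappa_le : forall i, (kappa i <= N)%nat.
Hypothesis kappa_tail : forall i, (m <= i)%nat -> kappa i = 0%nat.

Let delta_row i := prodR (S i) n (fun j =>
  (INR (kappa i) - INR (kappa j) + INR j - INR i) / (INR j - INR i)).

Lemma delta_row_le_binom i : (i < n)%nat -> 0 <= delta_row i <= binom_prod N n.
Proof.
  intros Hin.
  assert (Hrow : 0 <= delta_row i <=
                 prodR (S i) n (fun j => (INR N + (INR j - INR i)) / (INR j - INR i))).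
  { apply prodR_le; intros j Hj.
    pose proof (le_INR _ _ (kappa_nonincr i j ltac:(lia))).
    pose proof (le_INR _ _ (kappa_le i)); pose proof (pos_INR (kappa j)).
    assert (INR i < INR j) by (apply lt_INR; lia).
    split; [apply Rdiv_le_0_compat | apply Rmult_le_compat_r; [left; apply Rinv_0_lt_compat|]]; lra. }
  assert (Hshift : prodR (S i) n (fun j => (INR N + (INR j - INR i)) / (INR j - INR i))
                   = binom_prod N (n - S i)).
  { unfold binom_prod; replace (S i) with (1 + i)%nat by lia.
    replace n with (S (n - (1 + i)) + i)%nat at 1 by lia.
    apply prodR_shift; intros t; rewrite plus_INR; f_equal; ring. }
  pose proof (binom_prod_mono N (n - S i) n ltac:(lia)); lra.
Qed.

Lemma delta_row_tail i : (m <= i)%nat -> 0 <= delta_row i <= 1.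
Proof.
  intros Hmi; rewrite <- (prodR_one (S i) n); apply prodR_le; intros j Hj.
  rewrite !kappa_tail by lia.
  assert (INR i < INR j) by (apply lt_INR; lia).
  replace ((INR 0 - INR 0 + INR j - INR i) / (INR j - INR i)) with 1 by (simpl; field; lra).
  lra.
Qed.

Lemma delta_le_binom_pow : delta n kappa <= binom_prod N n ^ m.
Proof.
  pose proof (binom_prod_ge1 N n).
  apply Rle_trans with (prodR 0 n (fun i => if (i <? m)%nat then binom_prod N n else 1)).
  - apply prodR_le; intros i Hi; destruct (Nat.ltb_spec i m).
    + now apply delta_row_le_binom.
    + now apply delta_row_tail.
  - rewrite prodR_ltb_pow; apply Rle_pow; [lra | lia].
Qed.

End DeltaBound.

Lemma sum_map_le_length {A} (F : A -> R) (P : list A) B :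
  (forall x, In x P -> F x <= B) -> fold_right Rplus 0 (map F P) <= INR (length P) * B.
Proof.
  induction P as [|x P IH]; intros HB; cbn [fold_right map length]; [simpl; lra|].
  rewrite S_INR; pose proof (HB x (or_introl eq_refl)).
  assert (fold_right Rplus 0 (map F P) <= INR (length P) * B) by (apply IH; auto with datatypes).
  lra.
Qed.

Lemma delta_partition_le m n N l : In l (partitions_le m N) ->
  delta n (fun i => nth i l 0%nat) <= binom_prod N n ^ m.
Proof.
  unfold partitions_le; intros Hl; apply filter_In in Hl as [Hl Hb].
  apply andb_prop in Hb as [Hni _]; destruct (tuples_spec m N l Hl) as [Hlen HN].
  apply delta_le_binom_pow.
  - now apply nonincr_nth.
  - intros i; destruct (Nat.lt_ge_cases i m).
    + apply HN, nth_In; lia.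
    + rewrite nth_overflow by lia; lia.
  - intros i Hi; apply nth_overflow; lia.
Qed.

Lemma Sdelta_le m n k : Sdelta m n k <= (INR (2 * k) + 1) ^ m * binom_prod (2 * k) n ^ m.
Proof.
  assert (Hpow : 0 <= binom_prod (2 * k) n ^ m)
    by (apply pow_le; pose proof (binom_prod_ge1 (2 * k) n); lra).
  unfold Sdelta; eapply Rle_trans; [apply sum_map_le_length, delta_partition_le|].
  apply Rmult_le_compat_r; [exact Hpow|].
  unfold partitions_le; eapply Rle_trans; [apply le_INR, filter_length_le|].
  rewrite tuples_length, pow_INR, S_INR; lra.
Qed.

(* [ln] is [0] on nonpositive reals, so the comparison needs no sign condition on [x]. *)
Lemma ln_le_of_ge1 x y : x <= y -> 1 <= y -> ln x <= ln y.
Proof.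
  intros Hxy Hy; destruct (Rlt_dec 0 x) as [Hx|Hx]; [apply ln_le; lra|].
  assert (Hln0 : ln x = 0) by (unfold ln; destruct (Rlt_dec 0 x); [contradiction | reflexivity]).
  rewrite Hln0, <- ln_1; apply ln_le; lra.
Qed.

Lemma ln_Sdelta_le m n k : (0 < n)%nat -> (0 < k)%nat ->
  / INR n * ln (Sdelta m n k) <=
  INR m * (ln (INR (2 * k) + 1) / INR n) + INR m * entropy_rate (INR (2 * k) / INR n).
Proof.
  intros Hn Hk; set (N := (2 * k)%nat).
  pose proof (lt_0_INR n Hn); pose proof (pos_INR N); pose proof (binom_prod_ge1 N n).
  assert (HS : ln (Sdelta m n k) <= INR m * ln (INR N + 1) + INR m * ln (binom_prod N n)).
  { rewrite <- !ln_pow, <- ln_mult by (try apply pow_lt; lra).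
    apply ln_le_of_ge1; [apply Sdelta_le|].
    rewrite <- Rpow_mult_distr; apply pow_R1_Rle; nra. }
  pose proof (ln_binom_prod_le N n ltac:(unfold N; lia) Hn).
  pose proof (pos_INR m).
  apply (Rmult_le_compat_l (/ INR n)) in HS; [| left; apply Rinv_0_lt_compat; lra].
  eapply Rle_trans; [exact HS|].
  replace (/ INR n * (INR m * ln (INR N + 1) + INR m * ln (binom_prod N n)))
    with (INR m * (ln (INR N + 1) / INR n) + INR m * (/ INR n * ln (binom_prod N n)))
    by (field; lra).
  apply Rplus_le_compat_l, Rmult_le_compat_l; [lra|].
  apply (Rmult_le_reg_l (INR n)); [lra|].
  rewrite <- Rmult_assoc, Rinv_r, Rmult_1_l by lra; assumption.
Qed.

Lemma is_lim_seq_entropy_rate (u : nat -> R) r :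
  0 < r -> is_lim_seq u r -> is_lim_seq (fun j => entropy_rate (u j)) (entropy_rate r).
Proof.
  intros Hr Hu.
  assert (Hln : forall x, 0 < x -> continuity_pt ln x)
    by (intros x Hx; apply derivable_continuous_pt; exists (/ x); apply derivable_pt_lim_ln, Hx).
  assert (Hu1 : is_lim_seq (fun j => 1 + u j) (1 + r))
    by (apply is_lim_seq_plus'; [apply is_lim_seq_const | exact Hu]).
  unfold entropy_rate; apply is_lim_seq_minus'; apply is_lim_seq_mult'; try assumption.
  - apply (is_lim_seq_continuous ln); [apply Hln; lra | exact Hu1].
  - apply (is_lim_seq_continuous ln); [apply Hln; lra | exact Hu].
Qed.

Lemma is_lim_seq_ln_succ_div (a b : nat -> R) (l : R) :
  is_lim_seq a p_infty -> is_lim_seq b p_infty -> is_lim_seq (fun j => b j / a j) l ->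
  is_lim_seq (fun j => ln (b j + 1) / a j) 0.
Proof.
  intros Ha Hb Hba.
  assert (Hb1 : is_lim_seq (fun j => b j + 1) p_infty)
    by (apply (is_lim_seq_le_p_loc b); [exists 0%nat; intros; lra | exact Hb]).
  assert (Hln : is_lim_seq (fun j => ln (b j + 1) / (b j + 1)) 0)
    by (apply (is_lim_comp_seq (fun y => ln y / y) _ p_infty 0);
        [exact is_lim_div_ln_p | exists 0%nat; discriminate | exact Hb1]).
  assert (Hq : is_lim_seq (fun j => (b j + 1) / a j) (l + 0)).
  { apply (is_lim_seq_ext (fun j => b j / a j + / a j)); [intros j; unfold Rdiv; ring|].
    apply is_lim_seq_plus'; [exact Hba | apply (is_lim_seq_inv _ _ Ha); discriminate]. }
  replace (Finite 0) with (Finite (0 * (l + 0))) by (f_equal; ring).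
  apply (is_lim_seq_ext_loc (fun j => ln (b j + 1) / (b j + 1) * ((b j + 1) / a j)));
    [| apply is_lim_seq_mult'; assumption].
  destruct (proj2 (is_lim_seq_spec _ _) Ha 0) as [Ja HJa].
  destruct (proj2 (is_lim_seq_spec _ _) Hb1 0) as [Jb HJb].
  exists (Nat.max Ja Jb); intros j Hj.
  specialize (HJa j ltac:(lia)); specialize (HJb j ltac:(lia)).
  field; lra.
Qed.

Lemma eventually_gt0_of_lim_p_infty (u : nat -> nat) :
  is_lim_seq (fun j => INR (u j)) p_infty -> eventually (fun j => (0 < u j)%nat).
Proof.
  intros Hu; destruct (proj2 (is_lim_seq_spec _ _) Hu 0) as [J HJ].
  exists J; intros j Hj; apply INR_lt; simpl; apply HJ, Hj.
Qed.

Theorem lemma6p1 (m : nat) (rho : R) (hm : (1 <= m)%nat) (hrho : 0 < rho)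
  (n k : nat -> nat)
  (hn : is_lim_seq (fun j => INR (n j)) p_infty)
  (hk : is_lim_seq (fun j => INR (k j)) p_infty)
  (hr : is_lim_seq (fun j => INR (n j) / (2 * INR (k j))) (/ rho)) :
  Rbar_le
    (LimSup_seq (fun j => / INR (n j) * ln (Sdelta m (n j) (k j))))
    (Finite (INR m * ((1 + rho) * ln (1 + rho) - rho * ln rho))).
Proof.
  set (ratio := fun j => INR (2 * k j) / INR (n j)).
  set (bound := fun j => INR m * (ln (INR (2 * k j) + 1) / INR (n j)) + INR m * entropy_rate (ratio j)).
  assert (H2k : forall j, INR (2 * k j) = 2 * INR (k j)) by (intros; rewrite mult_INR; reflexivity).
  assert (Hratio : is_lim_seq ratio rho).
  { rewrite <- (Rinv_inv rho).
    apply (is_lim_seq_ext (fun j => / (INR (n j) / (2 * INR (k j)))));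
      [intros j; unfold ratio; rewrite Rinv_div, H2k; reflexivity|].
    apply (is_lim_seq_inv _ _ hr); intros Hr0; injection Hr0; apply Rinv_neq_0_compat; lra. }
  assert (H2k_inf : is_lim_seq (fun j => INR (2 * k j)) p_infty).
  { apply (is_lim_seq_le_p_loc (fun j => INR (k j))); [| exact hk].
    exists 0%nat; intros j _; rewrite H2k; pose proof (pos_INR (k j)); lra. }
  assert (Hbound : is_lim_seq bound (INR m * 0 + INR m * entropy_rate rho)).
  { apply is_lim_seq_plus'; apply is_lim_seq_mult'; try apply is_lim_seq_const.
    - exact (is_lim_seq_ln_succ_div _ _ rho hn H2k_inf Hratio).
    - exact (is_lim_seq_entropy_rate ratio rho hrho Hratio). }
  eapply Rbar_le_trans.
  - apply (LimSup_le _ bound).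
    destruct (eventually_gt0_of_lim_p_infty n hn) as [Jn HJn].
    destruct (eventually_gt0_of_lim_p_infty k hk) as [Jk HJk].
    exists (Nat.max Jn Jk); intros j Hj; apply ln_Sdelta_le; [apply HJn | apply HJk]; lia.
  - rewrite (is_LimSup_seq_unique bound _ (is_lim_LimSup_seq _ _ Hbound)).
    simpl; unfold entropy_rate; right; ring.
Qed.
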